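(* Let $\mathbf P=(P_s)_{s\in\mathrm{SEQ}}$ and $\mathbf Q=(Q_s)_{s\in\mathrm{SEQ}}$ be normal Suslin schemes on $C$ consisting of $\mathbf m$-measurable sets, such that $\mathbf A(\mathbf P)$, $\mathbf A(\mathbf Q)$ and all $\mathbf A_f(\mathbf P)$, $\mathbf A_f(\mathbf Q)$ are measurable, and such that $\mathbf m(P_s\triangle Q_s)=0$ for all $s\in\mathrm{SEQ}$. Then $\mathbf m(\mathbf A(\mathbf P))=\mathbf m(\mathbf A(\mathbf Q))$.
   Context: $C=\{0,1\}^{\mathbb N}$, $\mathbf m$ the completed uniform product measure; $\triangle$ is symmetric difference. $\mathrm{SEQ}$ is the set of finite sequences of naturals, $\bar g(n)=\langle g(0),\dots,g(n-1)\rangle$. A Suslin scheme is a map $s\mapsto P_s\subseteq C$; normal means $t$ extends $s$ implies $P_t\subseteq P_s$. $\mathbf A(\mathbf P)=\bigcup_{g\in\mathbb N^{\mathbb N}}\bigcap_n P_{\bar g(n)}$; $\mathbf A_f(\mathbf P)=\bigcup_{g\le f}\bigcap_n P_{\bar g(n)}$ with pointwise $\le$. *)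

From Stdlib Require Import Reals Lra Lia List.
Import ListNotations.
Open Scope R_scope.

Definition Cantor := nat -> bool.
Definition cset := Cantor -> Prop.

Definition cyl (s : list bool) : cset :=
  fun x => forall i, (i < length s)%nat -> x i = nth i s false.

(** Weight of a (possibly absent) cylinder: m([s]) = 2^{-|s|}. *)
Definition wt (o : option (list bool)) : R :=
  match o with Some s => (/ 2) ^ length s | None => 0 end.

Definition cover_sum (A : cset) (r : R) : Prop :=
  exists c : nat -> option (list bool),
    (forall x, A x -> exists n s, c n = Some s /\ cyl s x) /\
    infinite_sum (fun n => wt (c n)) r.

Lemma wt_nonneg o : 0 <= wt o.
Proof. destruct o; simpl; [apply pow_le; lra | lra]. Qed.

Lemma psum_nonneg (f : nat -> R) N :
  (forall n, 0 <= f n) -> 0 <= sum_f_R0 f N.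
Proof.
  intros Hf; induction N; simpl; [apply Hf|].
  pose proof (Hf (S N)); lra.
Qed.

Lemma cover_sum_nonneg A r : cover_sum A r -> 0 <= r.
Proof.
  intros [c [_ H]].
  destruct (Rle_dec 0 r) as [h|h]; [exact h|].
  exfalso. destruct (H (- r)) as [N HN]; [lra|].
  specialize (HN N (le_n N)).
  pose proof (psum_nonneg (fun n => wt (c n)) N (fun n => wt_nonneg (c n))).
  unfold R_dist in HN. apply Rabs_def2 in HN. lra.
Qed.

Lemma cover_sum_exists A : exists r, cover_sum A r.
Proof.
  exists 1. exists (fun n => match n with O => Some [] | S _ => None end).
  split.
  - intros x _. exists O, []. split; [reflexivity|]. intros i Hi; simpl in Hi; lia.
  - intros eps He. exists O. intros n _.
    assert (E : sum_f_R0 (fun n => wt (match n with O => Some [] | S _ => None end)) n = 1).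
    { induction n; simpl; [lra|]. rewrite IHn; lra. }
    rewrite E. unfold R_dist. rewrite Rminus_diag, Rabs_R0. exact He.
Qed.

Definition neg_cover_sums (A : cset) : R -> Prop := fun y => cover_sum A (- y).

Lemma neg_cover_sums_bound A : bound (neg_cover_sums A).
Proof.
  exists 0. intros y Hy. apply cover_sum_nonneg in Hy. lra.
Qed.

Lemma neg_cover_sums_ne A : exists y, neg_cover_sums A y.
Proof.
  destruct (cover_sum_exists A) as [r Hr]. exists (- r).
  unfold neg_cover_sums. rewrite Ropp_involutive. exact Hr.
Qed.

(** Outer measure m*(A) = inf of total weights of countable cylinder covers. *)
Definition mstar (A : cset) : R :=
  - proj1_sig (completeness (neg_cover_sums A)
                 (neg_cover_sums_bound A) (neg_cover_sums_ne A)).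

(** Carathéodory measurability w.r.t. m*; these are exactly the sets measurable
    for the completed uniform product measure m, and m = m* on them. *)
Definition measurable (A : cset) : Prop :=
  forall E : cset,
    mstar E = mstar (fun x => E x /\ A x) + mstar (fun x => E x /\ ~ A x).

Definition m (A : cset) : R := mstar A.

Definition symdiff (A B : cset) : cset :=
  fun x => (A x /\ ~ B x) \/ (B x /\ ~ A x).

Definition suslin_scheme := list nat -> cset.

Definition normal (P : suslin_scheme) : Prop :=
  forall s t : list nat, (exists u, t = s ++ u) -> forall x, P t x -> P s x.

Definition gbar (g : nat -> nat) (n : nat) : list nat := map g (seq 0 n).

Definition suslinA (P : suslin_scheme) : cset :=
  fun x => exists g : nat -> nat, forall n, P (gbar g n) x.

Definition suslinA_f (f : nat -> nat) (P : suslin_scheme) : cset :=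
  fun x => exists g : nat -> nat, (forall n, (g n <= f n)%nat) /\ forall n, P (gbar g n) x.

(* Outer measure alone suffices.  If x is in A(P) but not in A(Q), witnessed by g, then
   x lies in P_s \ Q_s for some initial segment s of g, so A(P) is covered by A(Q) together
   with the countably many null sets P_s \ Q_s.  Countable subadditivity of m* then gives
   m*(A(P)) <= m*(A(Q)), and the converse inequality by symmetry. *)
From Stdlib Require Import Reals List.
From Stdlib Require Import Lra Lia Cantor Classical ClassicalEpsilon.
Import ListNotations.
Open Scope R_scope.

Fixpoint psum (a : nat -> R) (n : nat) : R :=
  match n with O => 0 | S n => psum a n + a n end.

Lemma sum_f_R0_psum a n : sum_f_R0 a n = psum a (S n).
Proof. induction n; simpl in *; [lra|]. rewrite IHn. simpl. lra. Qed.

Lemma psum_ext a b n : (forall k, a k = b k) -> psum a n = psum b n.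
Proof. intros H; induction n; simpl; [lra|]. rewrite IHn, H; lra. Qed.

Lemma psum_le_mono a n p : (forall k, 0 <= a k) -> (n <= p)%nat -> psum a n <= psum a p.
Proof. intros H Hle; induction Hle; [lra|]. simpl. specialize (H m); lra. Qed.

Lemma psum_le_infinite_sum a r N :
  (forall k, 0 <= a k) -> infinite_sum a r -> psum a N <= r.
Proof.
  intros Ha Hr. apply Rnot_lt_le. intros Hlt.
  destruct (Hr (psum a N - r)) as [M HM]; [lra|].
  specialize (HM (Nat.max M N) (Nat.le_max_l _ _)).
  rewrite sum_f_R0_psum in HM. unfold Rdist in HM. apply Rabs_def2 in HM.
  assert (psum a N <= psum a (S (Nat.max M N))) by (apply psum_le_mono; [exact Ha | lia]).
  lra.
Qed.

Lemma infinite_sum_bounded a B :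
  (forall k, 0 <= a k) -> (forall N, psum a N <= B) ->
  exists r, infinite_sum a r /\ r <= B.
Proof.
  intros Ha HB.
  destruct (growing_cv (sum_f_R0 a)) as [l Hl].
  - intros n. rewrite !sum_f_R0_psum. simpl. specialize (Ha (S n)). lra.
  - exists B. intros x [i ->]. rewrite sum_f_R0_psum. apply HB.
  - exists l. split; [exact Hl|]. apply Rnot_lt_le. intros Hlt.
    destruct (Hl (l - B)) as [M HM]; [lra|].
    specialize (HM M (le_n M)). rewrite sum_f_R0_psum in HM.
    specialize (HB (S M)). unfold Rdist in HM. apply Rabs_def2 in HM. lra.
Qed.

Definition interleave {T} (a b : nat -> T) (j : nat) : T :=
  if Nat.even j then a (Nat.div2 j) else b (Nat.div2 j).

Lemma interleave_even {T} (a b : nat -> T) n : interleave a b (2 * n) = a n.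
Proof. unfold interleave. now rewrite Nat.even_even, Nat.div2_double. Qed.

Lemma interleave_odd {T} (a b : nat -> T) n : interleave a b (S (2 * n)) = b n.
Proof.
  unfold interleave. replace (S (2 * n)) with (2 * n + 1)%nat by lia.
  rewrite Nat.even_odd, Nat.add_1_r. simpl negb. now rewrite Nat.div2_succ_double.
Qed.

Lemma psum_interleave a b n :
  psum (interleave a b) (2 * n) = psum a n + psum b n.
Proof.
  induction n; [simpl; lra|].
  replace (2 * S n)%nat with (S (S (2 * n))) by lia.
  cbn [psum]. rewrite IHn, interleave_even, interleave_odd. lra.
Qed.

(* [fuel] only makes the recursion structural; [merge] supplies enough of it, and
   [merge_unfold] is the intended equation. *)
Fixpoint merge_fuel {T} (fuel : nat) (default : T) (c : nat -> nat -> T) (j : nat) : T :=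
  match fuel with
  | O => default
  | S fuel =>
      if Nat.even j then c O (Nat.div2 j)
      else merge_fuel fuel default (fun k => c (S k)) (Nat.div2 j)
  end.

Lemma merge_fuel_enough {T} (default : T) f1 :
  forall f2 c j, (j < f1)%nat -> (j < f2)%nat ->
  merge_fuel f1 default c j = merge_fuel f2 default c j.
Proof.
  induction f1; intros f2 c j H1 H2; [lia|]. destruct f2; [lia|]. simpl.
  destruct (Nat.even j) eqn:Ej; [reflexivity|].
  assert (j <> 0%nat) by (intros ->; discriminate).
  pose proof (Nat.lt_div2 j ltac:(lia)). apply IHf1; lia.
Qed.

Definition merge {T} (default : T) (c : nat -> nat -> T) (j : nat) : T :=
  merge_fuel (S j) default c j.

Lemma merge_unfold {T} (default : T) c j :
  merge default c j = interleave (c O) (merge default (fun k => c (S k))) j.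
Proof.
  unfold interleave, merge at 1. simpl merge_fuel at 1.
  destruct (Nat.even j) eqn:Ej; [reflexivity|].
  unfold merge. apply merge_fuel_enough; [|lia].
  assert (j <> 0%nat) by (intros ->; discriminate).
  pose proof (Nat.lt_div2 j ltac:(lia)). lia.
Qed.

Lemma merge_surj {T} (default : T) k :
  forall n c, exists j, merge default c j = c k n.
Proof.
  induction k; intros n c.
  - exists (2 * n)%nat. now rewrite merge_unfold, interleave_even.
  - destruct (IHk n (fun k => c (S k))) as [j Hj].
    exists (S (2 * j)). now rewrite merge_unfold, interleave_odd.
Qed.

Definition cover := nat -> option (list bool).

Definition covers (c : cover) (A : cset) : Prop :=
  forall x, A x -> exists n s, c n = Some s /\ cyl s x.

Definition weight_le (c : cover) (r : R) : Prop :=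
  forall N, psum (fun n => wt (c n)) N <= r.

Lemma covers_interleave a b A B :
  covers a A -> covers b B -> covers (interleave a b) (fun x => A x \/ B x).
Proof.
  intros Ha Hb x [Hx | Hx].
  - destruct (Ha x Hx) as [n Hn]. exists (2 * n)%nat. now rewrite interleave_even.
  - destruct (Hb x Hx) as [n Hn]. exists (S (2 * n)). now rewrite interleave_odd.
Qed.

Lemma weight_le_interleave a b r r' :
  weight_le a r -> weight_le b r' -> weight_le (interleave a b) (r + r').
Proof.
  intros Ha Hb N.
  apply Rle_trans with (psum (fun n => wt (interleave a b n)) (2 * N)).
  - apply psum_le_mono; [intros; apply wt_nonneg | lia].
  - rewrite (psum_ext _ (interleave (fun n => wt (a n)) (fun n => wt (b n))))
      by (intros j; unfold interleave; now destruct (Nat.even j)).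
    rewrite psum_interleave. specialize (Ha N). specialize (Hb N). lra.
Qed.

Lemma covers_merge (c : nat -> cover) (A : nat -> cset) :
  (forall k, covers (c k) (A k)) -> covers (merge None c) (fun x => exists k, A k x).
Proof.
  intros Hc x [k Hx]. destruct (Hc k x Hx) as [n [s [Hn Hs]]].
  destruct (merge_surj None k n c) as [j Hj]. exists j, s. now rewrite Hj.
Qed.

(* The budget [eps / 2 ^ (k + 1)] for the k-th cover halves at each level of [merge]. *)
Lemma weight_le_merge_pow2 p :
  forall eps (c : nat -> cover),
  (forall k, weight_le (c k) (eps / 2 ^ S k)) ->
  psum (fun j => wt (merge None c j)) (2 ^ p) <= eps.
Proof.
  induction p; intros eps c Hc.
  - simpl. rewrite merge_unfold, (interleave_even _ _ 0).
    specialize (Hc O 1%nat). simpl in Hc. pose proof (wt_nonneg (c O O)). lra.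
  - rewrite Nat.pow_succ_r'.
    rewrite (psum_ext _ (interleave (fun n => wt (c O n))
                           (fun n => wt (merge None (fun k => c (S k)) n))))
      by (intros j; rewrite merge_unfold; unfold interleave; now destruct (Nat.even j)).
    rewrite psum_interleave.
    assert (Hhead : psum (fun n => wt (c O n)) (2 ^ p) <= eps / 2).
    { specialize (Hc O (2 ^ p)%nat). replace (eps / 2) with (eps / 2 ^ 1) by (simpl; field).
      exact Hc. }
    assert (Htail : psum (fun n => wt (merge None (fun k => c (S k)) n)) (2 ^ p) <= eps / 2).
    { apply IHp. intros k.
      replace (eps / 2 / 2 ^ S k) with (eps / 2 ^ S (S k)); [apply Hc|].
      assert (2 ^ k > 0) by (apply pow_lt; lra). simpl. field. lra. }
    lra.
Qed.

Lemma weight_le_merge eps (c : nat -> cover) :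
  (forall k, weight_le (c k) (eps / 2 ^ S k)) -> weight_le (merge None c) eps.
Proof.
  intros Hc N. apply Rle_trans with (psum (fun j => wt (merge None c j)) (2 ^ N)).
  - apply psum_le_mono; [intros; apply wt_nonneg|].
    pose proof (Nat.pow_gt_lin_r 2 N ltac:(lia)). lia.
  - now apply weight_le_merge_pow2.
Qed.

Lemma mstar_le_cover_sum A r : cover_sum A r -> mstar A <= r.
Proof.
  intros H. unfold mstar. destruct (completeness _ _ _) as [l [Hub Hlub]]. simpl.
  assert (-r <= l) by (apply Hub; unfold neg_cover_sums; now rewrite Ropp_involutive).
  lra.
Qed.

Lemma cover_sum_lt_mstar A eps : 0 < eps -> exists r, cover_sum A r /\ r < mstar A + eps.
Proof.
  intros He. apply NNPP. intros Hno. unfold mstar in Hno.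
  destruct (completeness _ _ _) as [l [Hub Hlub]]. simpl in Hno.
  assert (l <= l - eps); [|lra].
  apply Hlub. intros y Hy. apply Rnot_lt_le. intros Hlt.
  apply Hno. exists (- y). split; [exact Hy | lra].
Qed.

Lemma mstar_le_weight A c r : covers c A -> weight_le c r -> mstar A <= r.
Proof.
  intros Hc Hw.
  destruct (infinite_sum_bounded (fun n => wt (c n)) r) as [r' [Hr' Hle]];
    [intros; apply wt_nonneg | exact Hw |].
  assert (mstar A <= r') by (apply mstar_le_cover_sum; now exists c). lra.
Qed.

Lemma exists_cover_weight_le A eps :
  0 < eps -> exists c, covers c A /\ weight_le c (mstar A + eps).
Proof.
  intros He. destruct (cover_sum_lt_mstar A eps He) as [r [[c [Hc Hr]] Hlt]].
  exists c. split; [exact Hc|]. intros N.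
  pose proof (psum_le_infinite_sum _ _ N (fun n => wt_nonneg (c n)) Hr). lra.
Qed.

Lemma mstar_le_union_null (A B : cset) (Z : nat -> cset) :
  (forall k, mstar (Z k) = 0) ->
  (forall x, A x -> B x \/ exists k, Z k x) ->
  mstar A <= mstar B.
Proof.
  intros HZ HA. apply Rle_plus_epsilon. intros eps He.
  destruct (exists_cover_weight_le B (eps / 2) ltac:(lra)) as [cB [HcB HwB]].
  assert (Hsmall : forall k, exists c, covers c (Z k) /\ weight_le c (eps / 2 / 2 ^ S k)).
  { intros k. rewrite <- (Rplus_0_l (eps / 2 / 2 ^ S k)), <- (HZ k).
    apply exists_cover_weight_le, Rdiv_lt_0_compat; [lra | apply pow_lt; lra]. }
  destruct (choice _ Hsmall) as [cZ HcZ].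
  apply (mstar_le_weight _ (interleave cB (merge None cZ))).
  - intros x Hx. apply (covers_interleave _ _ B (fun x => exists k, Z k x)); [exact HcB| |auto].
    apply covers_merge. intros k. apply HcZ.
  - replace (mstar B + eps) with (mstar B + eps / 2 + eps / 2) by lra.
    apply weight_le_interleave; [exact HwB|].
    apply weight_le_merge. intros k. apply HcZ.
Qed.

Fixpoint code (s : list nat) : nat :=
  match s with [] => O | a :: s => S (to_nat (a, code s)) end.

Fixpoint decode_fuel (fuel j : nat) : list nat :=
  match fuel, j with
  | O, _ | _, O => []
  | S fuel, S j => let (a, b) := of_nat j in a :: decode_fuel fuel b
  end.

Definition decode (j : nat) : list nat := decode_fuel (S j) j.

Lemma decode_fuel_code s : forall fuel, (code s < fuel)%nat -> decode_fuel fuel (code s) = s.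
Proof.
  induction s as [|a s IH]; intros fuel H; destruct fuel; cbn [code decode_fuel] in *;
    try lia; try reflexivity.
  rewrite cancel_of_to. f_equal. apply IH.
  pose proof (to_nat_non_decreasing a (code s)). lia.
Qed.

Lemma decode_code s : decode (code s) = s.
Proof. apply decode_fuel_code. lia. Qed.

Lemma suslinA_sub_diff (P Q : suslin_scheme) x :
  suslinA P x -> suslinA Q x \/ exists s, P s x /\ ~ Q s x.
Proof.
  intros [g Hg]. destruct (classic (suslinA Q x)) as [HQ | HQ]; [now left|].
  right. apply NNPP. intros Hno. apply HQ. exists g. intros n.
  apply NNPP. intros Hq. apply Hno. now exists (gbar g n).
Qed.

Lemma mstar_suslinA_le (P Q D : suslin_scheme) :
  (forall s, mstar (D s) = 0) ->
  (forall s x, P s x -> ~ Q s x -> D s x) ->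
  mstar (suslinA P) <= mstar (suslinA Q).
Proof.
  intros Hnull HD.
  apply (mstar_le_union_null _ _ (fun k => D (decode k))); [intros k; apply Hnull|].
  intros x Hx. destruct (suslinA_sub_diff P Q x Hx) as [HQ | [s [HP HQ]]]; [now left|].
  right. exists (code s). rewrite decode_code. now apply HD.
Qed.

Theorem lemma5 (P Q : suslin_scheme) :
  normal P -> normal Q ->
  (forall s, measurable (P s)) -> (forall s, measurable (Q s)) ->
  measurable (suslinA P) -> measurable (suslinA Q) ->
  (forall f, measurable (suslinA_f f P)) -> (forall f, measurable (suslinA_f f Q)) ->
  (forall s, m (symdiff (P s) (Q s)) = 0) ->
  m (suslinA P) = m (suslinA Q).
Proof.
  intros _ _ _ _ _ _ _ _ Hnull. unfold m in *. apply Rle_antisym.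
  - apply (mstar_suslinA_le P Q (fun s => symdiff (P s) (Q s))); [exact Hnull|].
    intros s x HP HQ. now left.
  - apply (mstar_suslinA_le Q P (fun s => symdiff (P s) (Q s))); [exact Hnull|].
    intros s x HQ HP. now right.
Qed.
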